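(* Let $R$ be a commutative ring and $I=(f_1,\dots,f_r)$ an ideal such that the Koszul homology algebra $H_\bullet(\mathbf f;R)$ is generated by elements of degree one. Then for any finitely generated ideal $\mathfrak a\subseteq I$, $\operatorname{Kitt}(\mathfrak a,I)=\operatorname{Fitt}_0(I/\mathfrak a)+\mathfrak a$. In particular this holds when $f_1,\dots,f_r$ is an almost regular sequence (i.e. $\operatorname{grade}(I)=r-1$). If $f_1,\dots,f_r$ is a regular sequence, then $\operatorname{Kitt}(\mathfrak a,I)=I_r(\Phi)+\mathfrak a$, where $\mathfrak a=(a_1,\dots,a_s)$ and $\Phi$ is an $r\times s$ matrix with $a_j=\sum_i\Phi_{ij}f_i$.
   Context: For $\mathfrak a=(a_1,\dots,a_s)\subseteq I$ and a matrix $(c_{ij})$ with $a_j=\sum_ic_{ij}f_i$: in the Koszul DG algebra $K_\bullet(\mathbf f;R)$ (exterior algebra on $e_1,\dots,e_r$, $\partial e_i=f_i$) let $\zeta_j=\sum_ic_{ij}e_i$, $\Gamma_\bullet$ the subalgebra generated by the $\zeta_j$, $Z_\bullet$ the subalgebra of cycles; $\operatorname{Kitt}(\mathfrak a,I)$ is the span of the products $\gamma\wedge z$ ($\gamma\in\Gamma_j$, $z\in Z_{r-j}$) in $K_r=Re_1\wedge\cdots\wedge e_r\cong R$, an ideal of $R$ independent of the choices. $I_r(\Phi)$ is the ideal of $r\times r$ minors of $\Phi$; $\operatorname{Fitt}_0$ is the zeroth Fitting ideal. *)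

(* Koszul DG algebra K(f;R) modelled as the exterior algebra
   over R on e_0..e_{r-1}: an element is a finite function from subsets
   S of 'I_r to R (coefficient of e_S, S listed increasingly). *)
From HB Require Import structures.
From mathcomp Require Import all_boot all_order all_algebra.
Set Implicit Arguments. Unset Strict Implicit. Unset Printing Implicit Defensive.
Import Order.TTheory GRing.Theory.
Local Open Scope ring_scope.

Section Koszul.
Variables (R : comPzRingType) (r : nat).

Local Notation kel := {ffun {set 'I_r} -> R}.

Definition kscale (c : R) (x : kel) : kel := [ffun S => c * x S].

(* sign of e_S /\ e_T = sgn S T * e_(S u T) for disjoint S, T *)
Definition ksgn (S T : {set 'I_r}) : R :=
  (-1) ^+ #|[set p : 'I_r * 'I_r | [&& p.1 \in S, p.2 \in T & (p.2 < p.1)%N]]|.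

Definition wedge (x y : kel) : kel :=
  [ffun U : {set 'I_r} => \sum_(S : {set 'I_r}) \sum_(T : {set 'I_r})
     (if (S :|: T == U) && [disjoint S & T] then ksgn S T * x S * y T else 0)].

Definition kone : kel := [ffun S => (S == set0)%:R].
Definition kgen (i : 'I_r) : kel := [ffun S => (S == [set i])%:R].

Definition wprod (s : seq kel) : kel := foldr wedge kone s.

(* Koszul differential: d e_i = f_i, extended as a graded derivation:
   d e_S = sum_{i in S} (-1)^{#{j in S | j < i}} f_i e_{S\i} *)
Definition kdiff (f : 'I_r -> R) (x : kel) : kel :=
  [ffun U : {set 'I_r} => \sum_(i : 'I_r | i \notin U)
     (-1) ^+ #|[set j in U | (j < i)%N]| * f i * x (i |: U)].

Definition homog (k : nat) (x : kel) := forall S : {set 'I_r}, #|S| != k -> x S = 0.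

Definition kcycle (f : 'I_r -> R) (k : nat) (x : kel) :=
  homog k x /\ kdiff f x = 0.
Definition kbound (f : 'I_r -> R) (k : nat) (x : kel) :=
  exists y, homog k.+1 y /\ x = kdiff f y.

Inductive kspan (P : kel -> Prop) : kel -> Prop :=
| kspan0 : kspan P 0
| kspan_gen x : P x -> kspan P x
| kspanD x y : kspan P x -> kspan P y -> kspan P (x + y)
| kspanZ (c : R) x : kspan P x -> kspan P (kscale c x).

(* the Koszul homology algebra H(f;R) is generated (as R-algebra) by
   elements of degree one: every homogeneous cycle of degree k is, modulo
   boundaries, an R-linear combination of k-fold products of degree-one
   cycles *)
Definition prod_deg1_cycles (f : 'I_r -> R) (k : nat) (x : kel) :=
  exists zs : k.-tuple kel, (forall z, z \in zs -> kcycle f 1 z) /\ x = wprod zs.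

Definition koszul_gen_deg1 (f : 'I_r -> R) :=
  forall k x, kcycle f k x ->
    exists y b, kspan (prod_deg1_cycles f k) y /\ kbound f k b /\ x = y + b.

Inductive ideal_gen (P : R -> Prop) : R -> Prop :=
| ideal0 : ideal_gen P 0
| ideal_in x : P x -> ideal_gen P x
| idealD x y : ideal_gen P x -> ideal_gen P y -> ideal_gen P (x + y)
| idealM (c : R) x : ideal_gen P x -> ideal_gen P (c * x).

Definition idealF (s : nat) (a : 'I_s -> R) : R -> Prop :=
  ideal_gen (fun x => exists j, x = a j).

Definition ideal_add (I J : R -> Prop) : R -> Prop :=
  fun x => exists u v, I u /\ J v /\ x = u + v.

Definition kzeta (s : nat) (c : 'M[R]_(r, s)) (j : 'I_s) : kel :=
  \sum_(i < r) kscale (c i j) (kgen i).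

Definition kGamma (s : nat) (c : 'M[R]_(r, s)) (j : nat) : kel -> Prop :=
  kspan (fun x => exists js : j.-tuple 'I_s, x = wprod (map (kzeta c) js)).

(* Kitt(a, I): span of the top coefficients (K_r = R e_1..e_r) of the
   products gamma /\ z with gamma in Gamma_j, z in Z_{r-j} *)
Definition Kitt (f : 'I_r -> R) (s : nat) (c : 'M[R]_(r, s)) : R -> Prop :=
  ideal_gen (fun x => exists j g z, (j <= r)%N /\ kGamma c j g /\
                        kcycle f (r - j) z /\ x = wedge g z setT).

(* Fitt_0(I/a), computed from the presentation of I/a on the generators
   (images of) f_1..f_r: ideal generated by the r x r minors of the matrix
   of relations, i.e. by det M for M whose columns are relations
   v with sum_i v_i f_i in a. *)
Definition Fitt0_quot (f : 'I_r -> R) (s : nat) (a : 'I_s -> R) : R -> Prop :=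
  ideal_gen (fun x => exists M : 'M[R]_r,
     (forall k : 'I_r, idealF a (\sum_(i < r) M i k * f i)) /\ x = \det M).

Definition minors_ideal (s : nat) (Phi : 'M[R]_(r, s)) : R -> Prop :=
  ideal_gen (fun x => exists g : 'I_r -> 'I_s, x = \det (colsub g Phi)).

Definition regular_seq (f : 'I_r -> R) :=
  (forall (i : 'I_r) (x : R),
     ideal_gen (fun y => exists j : 'I_r, (j < i)%N /\ y = f j) (x * f i) ->
     ideal_gen (fun y => exists j : 'I_r, (j < i)%N /\ y = f j) x) /\
  ~ idealF f 1.

Definition koszul_H_zero (f : 'I_r -> R) (k : nat) :=
  forall x, kcycle f k x -> kbound f k x.

(* almost regular: grade(I) = r - 1, grade measured by Koszul homology
   (grade I = r - max{k | H_k(f;R) <> 0}), i.e. H_1 <> 0 and H_k = 0, k >= 2 *)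
Definition almost_regular (f : 'I_r -> R) :=
  (0 < r)%N /\ ~ koszul_H_zero f 1 /\ forall k, (2 <= k)%N -> koszul_H_zero f k.

End Koszul.

Definition ideal_eq (R : comPzRingType) (I J : R -> Prop) := forall x, I x <-> J x.

(* Write [zeta_j = sum_i c_ij e_i], so that [d zeta_j = a_j].  Wedging with a
   degree-one element [v] obeys [d (v /\ x) = (d v) x - v /\ d x], so wedging a
   boundary [d y] with a product [gamma] of [zeta]s gives [+- d (gamma /\ y)]
   modulo [a]; as boundaries have zero top coefficient, [gamma /\ d y] lies in
   [a].  The top coefficient of a product of [r] degree-one elements [v_k] is
   [det (v_k i)], and [d v_k \in a] says exactly that the columns are relations
   of [I/a]: so [gamma /\ z_1 /\ ... /\ z_k], with [z_i] degree-one cycles,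
   gives a generator of [Fitt_0(I/a)].  Conversely every column [v] with
   [d v = sum_j d_j a_j] is the cycle [v - sum_j d_j zeta_j] plus
   [sum_j d_j zeta_j], and expanding the product (the factors anticommute)
   writes [det] as a sum of generators of [Kitt]; [a_j] is the top coefficient
   of [zeta_j /\ d e_top].  A regular sequence has an acyclic Koszul complex in
   positive degrees (induction on the number of [f_i] involved, using that
   [f_m] is a nonzerodivisor modulo [f_0, ..., f_(m-1)]), so only products with
   [r] factors [zeta] survive, and these give the maximal minors of [Phi]. *)

From mathcomp Require Import all_boot all_order all_algebra.
From mathcomp Require Import ring.
Set Implicit Arguments. Unset Strict Implicit. Unset Printing Implicit Defensive.
Import GRing.Theory.
Local Open Scope ring_scope.

Section Ideals.
Variable R : comPzRingType.
Implicit Types (P Q : R -> Prop) (t : R).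

Lemma ideal_genN P t : ideal_gen P t -> ideal_gen P (- t).
Proof. by move=> h; rewrite -mulN1r; apply: idealM. Qed.

Lemma ideal_genMr P c t : ideal_gen P t -> ideal_gen P (t * c).
Proof. by rewrite mulrC; apply: idealM. Qed.

Lemma ideal_gen_sum P (I : finType) (B : pred I) (F : I -> R) :
  (forall i, B i -> ideal_gen P (F i)) -> ideal_gen P (\sum_(i | B i) F i).
Proof. by move=> h; apply: (big_ind (ideal_gen P)) => //; [exact: ideal0 | exact: idealD]. Qed.

Lemma ideal_gen_min P Q t :
  (forall x, P x -> ideal_gen Q x) -> ideal_gen P t -> ideal_gen Q t.
Proof. by move=> hPQ; elim=> *; [exact: ideal0 | exact: hPQ | exact: idealD | exact: idealM]. Qed.

Lemma ideal_add_gen_min P P1 P2 t :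
  (forall x, P x -> ideal_add (ideal_gen P1) (ideal_gen P2) x) ->
  ideal_gen P t -> ideal_add (ideal_gen P1) (ideal_gen P2) t.
Proof.
move=> hP; elim=> [|x /hP //|x y _ [u1 [v1 [h1 [h2 ->]]]] _ [u2 [v2 [h3 [h4 ->]]]]|
                   c x _ [u [v [h1 [h2 ->]]]]].
- by exists 0, 0; split; [exact: ideal0 | split; [exact: ideal0 | rewrite addr0]].
- exists (u1 + u2), (v1 + v2); split; first exact: idealD.
  by split; [exact: idealD | rewrite addrACA].
- exists (c * u), (c * v); split; first exact: idealM.
  by split; [exact: idealM | rewrite mulrDr].
Qed.

Lemma ideal_eq_gen_add P P1 P2 :
  (forall x, P x -> ideal_add (ideal_gen P1) (ideal_gen P2) x) ->
  (forall x, P1 x -> ideal_gen P x) -> (forall x, P2 x -> ideal_gen P x) ->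
  ideal_eq (ideal_gen P) (ideal_add (ideal_gen P1) (ideal_gen P2)).
Proof.
move=> hP hP1 hP2 t; split; first exact: ideal_add_gen_min.
by move=> [u [v [hu [hv ->]]]]; apply: idealD; [exact: ideal_gen_min hu | exact: ideal_gen_min hv].
Qed.

Lemma ideal_gen_lincomb (I : finType) (B : pred I) (g : I -> R) t :
  ideal_gen (fun y => exists i, B i /\ y = g i) t ->
  exists d : I -> R, (forall i, ~~ B i -> d i = 0) /\ t = \sum_i d i * g i.
Proof.
elim=> [|x [i [hi ->]]|x y _ [d1 [h1 ->]] _ [d2 [h2 ->]]|c x _ [d [h ->]]].
- by exists (fun _ => 0); split => //; rewrite big1 // => i _; rewrite mul0r.
- exists (fun k => (k == i)%:R); split; first by move=> k; case: eqP => // -> /negP.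
  by rewrite (bigD1 i) //= eqxx mul1r big1 ?addr0 // => k /negbTE ->; rewrite mul0r.
- exists (fun k => d1 k + d2 k); split; first by move=> k hk; rewrite h1 // h2 // addr0.
  by rewrite -big_split; apply: eq_bigr => k _; rewrite mulrDl.
- exists (fun k => c * d k); split; first by move=> k hk; rewrite h // mulr0.
  by rewrite mulr_sumr; apply: eq_bigr => k _; rewrite mulrA.
Qed.

Lemma idealF_lincomb (s : nat) (a : 'I_s -> R) t :
  idealF a t -> exists d : 'I_s -> R, t = \sum_j d j * a j.
Proof.
move=> ta; have [|d [_ ->]] := @ideal_gen_lincomb _ predT a t; last by exists d.
by apply: ideal_gen_min ta => _ [j ->]; apply: ideal_in; exists j.
Qed.

End Ideals.

Section ExteriorAlgebra.
Context {R : comPzRingType} {r : nat}.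
Local Notation kel := {ffun {set 'I_r} -> R}.
Local Notation kone := (kone R r).
Implicit Types (x y z v w : kel) (S T U V : {set 'I_r}) (i j k : 'I_r).

Lemma kscaleE c x S : kscale c x S = c * x S. Proof. by rewrite ffunE. Qed.
Lemma kscale1 x : kscale 1 x = x. Proof. by apply/ffunP => S; rewrite ffunE mul1r. Qed.
Lemma kscale0 x : kscale 0 x = 0. Proof. by apply/ffunP => S; rewrite !ffunE mul0r. Qed.

Lemma setUD_sub S U : S \subset U -> S :|: (U :\: S) = U.
Proof. by move=> /setIidPr {1}<-; rewrite setID. Qed.

Lemma setU1D1 i k U : k != i -> (i |: U) :\ k = i |: (U :\ k).
Proof.
move=> ki; apply/setP => j; rewrite !inE.
by case: (eqVneq j i) => [->|] //=; rewrite eq_sym ki.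
Qed.

Lemma signr_ltC i k : i != k -> (-1) ^+ (i < k)%N = - (-1) ^+ (k < i)%N :> R.
Proof. by move=> ik; rewrite -signrN; case: ltngtP => // /val_inj eik; rewrite eik eqxx in ik. Qed.

(* For [i \notin U]: [e_i /\ e_U = esign U i *: e_(i |: U)]. *)
Definition esign U i : R := \prod_(j in U) (-1) ^+ (j < i)%N.

Lemma esign_card U i : (-1) ^+ #|[set j in U | (j < i)%N]| = esign U i.
Proof.
rewrite /esign -prodr_const !(big_mkcond (fun j => j \in _)) /=.
by apply: eq_bigr => j _; rewrite inE; case: (j \in U); case: (j < i)%N.
Qed.

Lemma esign0 i : esign set0 i = 1. Proof. by rewrite /esign big_set0. Qed.

Lemma esignU1 U i k : i \notin U -> esign (i |: U) k = (-1) ^+ (i < k)%N * esign U k.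
Proof. by move=> iU; rewrite /esign big_setU1. Qed.

Lemma esignD1 U i k : k \in U -> esign U i = (-1) ^+ (k < i)%N * esign (U :\ k) i.
Proof. by move=> kU; rewrite /esign (big_setD1 _ kU). Qed.

Lemma esignD1_sign U i k : k \in U -> esign (U :\ k) i = (-1) ^+ (k < i)%N * esign U i.
Proof. by move=> kU; rewrite (esignD1 i kU) mulrA -expr2 sqrr_sign mul1r. Qed.

Lemma esignD1_self U i : esign (U :\ i) i = esign U i.
Proof.
have [iU|iU] := boolP (i \in U); first by rewrite (esignD1 _ iU) ltnn mul1r.
by move: iU; rewrite -disjoints1 disjoint_sym => /setDidPl ->.
Qed.

Lemma esign_sqr U i : esign U i * esign U i = 1.
Proof. by rewrite /esign -big_split; apply: big1 => j _ /=; rewrite -expr2 sqrr_sign. Qed.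

Lemma esignU U V i : [disjoint U & V] -> esign (U :|: V) i = esign U i * esign V i.
Proof. by move=> UV; rewrite /esign -bigU //; apply: eq_bigl => j; rewrite !inE. Qed.

Lemma ksgnE S T : ksgn R S T = \prod_(p in S) esign T p.
Proof.
rewrite /ksgn -prodr_const pair_big_dep /= [RHS]big_mkcond [LHS]big_mkcond /=.
apply: eq_bigr => -[p q] _ /=; rewrite inE /=.
by case: (p \in S); case: (q \in T) => //=; case: (q < p)%N.
Qed.

Lemma ksgnU1 i S T : i \notin S -> ksgn R (i |: S) T = esign T i * ksgn R S T.
Proof. by move=> iS; rewrite !ksgnE big_setU1. Qed.

Lemma wedgeDl x y z : wedge (x + y) z = wedge x z + wedge y z.
Proof.
apply/ffunP => U; rewrite !ffunE -big_split; apply: eq_bigr => S _.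
by rewrite -big_split; apply: eq_bigr => T _; rewrite !ffunE; case: ifP => _ /=; ring.
Qed.

Lemma wedgeZl c x z : wedge (kscale c x) z = kscale c (wedge x z).
Proof.
apply/ffunP => U; rewrite !ffunE mulr_sumr; apply: eq_bigr => S _.
by rewrite mulr_sumr; apply: eq_bigr => T _; rewrite !ffunE; case: ifP => _ /=; ring.
Qed.

Lemma wedge0l z : wedge 0 z = 0.
Proof.
apply/ffunP => U; rewrite !ffunE; apply: big1 => S _; apply: big1 => T _.
by rewrite !ffunE; case: ifP => _ /=; ring.
Qed.

Lemma wedgeDr x y z : wedge x (y + z) = wedge x y + wedge x z.
Proof.
apply/ffunP => U; rewrite !ffunE -big_split; apply: eq_bigr => S _.
by rewrite -big_split; apply: eq_bigr => T _; rewrite !ffunE; case: ifP => _ /=; ring.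
Qed.

Lemma wedgeZr c x z : wedge x (kscale c z) = kscale c (wedge x z).
Proof.
apply/ffunP => U; rewrite !ffunE mulr_sumr; apply: eq_bigr => S _.
by rewrite mulr_sumr; apply: eq_bigr => T _; rewrite !ffunE; case: ifP => _ /=; ring.
Qed.

Lemma wedge0r x : wedge x 0 = 0.
Proof.
apply/ffunP => U; rewrite !ffunE; apply: big1 => S _; apply: big1 => T _.
by rewrite !ffunE; case: ifP => _ /=; ring.
Qed.

Lemma wedgeE x y U :
  wedge x y U = \sum_(S : {set 'I_r} | S \subset U) ksgn R S (U :\: S) * x S * y (U :\: S).
Proof.
rewrite ffunE [RHS]big_mkcond; apply: eq_bigr => S _.
have cond T : (S :|: T == U) && [disjoint S & T] = (S \subset U) && (T == U :\: S).
  apply/andP/andP => [[/eqP <- ST]|[SU /eqP ->]].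
    rewrite subsetUl setDUl setDv set0U; split=> //.
    by rewrite disjoint_sym in ST; move/setDidPl: ST => ->.
  by rewrite setUD_sub // disjoints_subset setCD subsetUr.
under eq_bigr do rewrite cond.
by case: (boolP (S \subset U)) => SU /=; [rewrite -big_mkcond big_pred1_eq | apply: big1].
Qed.

Lemma wedge1l y : wedge kone y = y.
Proof.
apply/ffunP => U; rewrite wedgeE (bigD1 set0) ?sub0set //= big1 ?addr0.
  by rewrite setD0 ksgnE big_set0 ffunE eqxx !mul1r.
by move=> S /andP [_ /negbTE S0]; rewrite ffunE S0 mulr0 mul0r.
Qed.

Lemma wedge1r y : wedge y kone = y.
Proof.
apply/ffunP => U; rewrite wedgeE (bigD1 U) //= big1 ?addr0.
  by rewrite setDv ksgnE ffunE eqxx mulr1 big1 ?mul1r // => p _; rewrite /esign big_set0.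
move=> S /andP [SU SnU]; rewrite ffunE setD_eq0.
by case: (boolP (U \subset S)) => US; [rewrite eqEsubset SU US in SnU | rewrite mulr0].
Qed.

Lemma sum_card1 (G : {set 'I_r} -> R) :
  (forall S, #|S| != 1%N -> G S = 0) -> \sum_S G S = \sum_i G [set i].
Proof.
move=> G0; transitivity (\sum_S \sum_i (if S == [set i] then G S else 0)).
  apply: eq_bigr => S _; have [/cards1P [j ->]|S1] := boolP (#|S| == 1%N).
    rewrite (bigD1 j) //= eqxx big1 ?addr0 // => i ij.
    by rewrite (inj_eq set1_inj) eq_sym (negbTE ij).
  by rewrite G0 // big1 // => i _; case: ifP.
by rewrite exchange_big; apply: eq_bigr => i _; rewrite -big_mkcond big_pred1_eq.
Qed.

(* Left multiplication by the degree-one component of [v]. *)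
Definition lwedge v x : kel :=
  [ffun U : {set 'I_r} => \sum_(i in U) esign U i * v [set i] * x (U :\ i)].

Lemma wedge_lwedge v x : homog 1 v -> wedge v x = lwedge v x.
Proof.
move=> v1; apply/ffunP => U; rewrite wedgeE ffunE big_mkcond sum_card1 /=; last first.
  by move=> S S1; rewrite v1 //; case: ifP => _; rewrite ?mulr0 ?mul0r.
rewrite [RHS]big_mkcond; apply: eq_bigr => i _; rewrite sub1set.
by case: ifP => // iU; rewrite ksgnE big_set1 esignD1_self.
Qed.

Lemma lwedgeDr v x y : lwedge v (x + y) = lwedge v x + lwedge v y.
Proof.
by apply/ffunP => U; rewrite !ffunE -big_split; apply: eq_bigr => i _; rewrite !ffunE /=; ring.
Qed.

Lemma lwedgeZr v c x : lwedge v (kscale c x) = kscale c (lwedge v x).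
Proof.
by apply/ffunP => U; rewrite !ffunE mulr_sumr; apply: eq_bigr => i _; rewrite !ffunE /=; ring.
Qed.

Lemma lwedge0r v : lwedge v 0 = 0.
Proof. apply/ffunP => U; rewrite !ffunE; apply: big1 => i _; rewrite !ffunE /=; ring. Qed.

Lemma lwedgeDl v w x : lwedge (v + w) x = lwedge v x + lwedge w x.
Proof.
by apply/ffunP => U; rewrite !ffunE -big_split; apply: eq_bigr => i _; rewrite !ffunE /=; ring.
Qed.

Lemma lwedgeZl c v x : lwedge (kscale c v) x = kscale c (lwedge v x).
Proof.
by apply/ffunP => U; rewrite !ffunE mulr_sumr; apply: eq_bigr => i _; rewrite !ffunE /=; ring.
Qed.

Lemma lwedge0l x : lwedge 0 x = 0.
Proof. apply/ffunP => U; rewrite !ffunE; apply: big1 => i _; rewrite !ffunE /=; ring. Qed.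

Lemma lwedge_suml (I : finType) (F : I -> kel) x :
  lwedge (\sum_t F t) x = \sum_t lwedge (F t) x.
Proof. exact: (big_morph (lwedge^~ x) (fun v w => lwedgeDl v w x) (lwedge0l x)). Qed.

Lemma sum_setU1 i (G : {set 'I_r} -> R) :
  \sum_(S : {set 'I_r} | i \in S) G S = \sum_(S : {set 'I_r} | i \notin S) G (i |: S).
Proof.
pose tg S := if i \in S then S :\ i else i |: S.
have tgK : involutive tg.
  by move=> S; rewrite /tg; case: (boolP (i \in S)) => iS; rewrite ?setD11 ?setD1K ?setU11 ?setU1K.
rewrite (reindex_inj (inv_inj tgK)) /=.
by apply: eq_big => S; rewrite /tg; case: (boolP (i \in S)) => iS; rewrite ?setD11 ?setU11.
Qed.

Lemma lwedge_wedgeA v x y : wedge (lwedge v x) y = lwedge v (wedge x y).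
Proof.
apply/ffunP => U; rewrite wedgeE ffunE.
under eq_bigr do rewrite ffunE mulr_sumr mulr_suml.
rewrite (exchange_big_dep xpredT) //=.
under [RHS]eq_bigr do rewrite wedgeE mulr_sumr.
rewrite [RHS](big_mkcond (fun i => i \in U)) /=; apply: eq_bigr => i _.
rewrite (eq_bigl (fun S => (i \in S) && (S \subset U))) => [|S]; last by rewrite andbC.
rewrite big_mkcondr sum_setU1.
have [iU|iU] := boolP (i \in U); last by apply: big1 => S _; rewrite subUset sub1set (negbTE iU).
rewrite -big_mkcondr [LHS](eq_bigl (fun S => S \subset U :\ i)) => [|S]; last first.
  by rewrite subUset sub1set iU subsetD1 andbC.
apply: eq_bigr => S SU; have iS : i \notin S by move: SU; rewrite subsetD1 => /andP[].
have -> : esign U i = esign (U :\ i :\: S) i * esign S i.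
  rewrite -esignD1_self -{1}(setUD_sub SU) esignU 1?mulrC //.
  by rewrite disjoints_subset setCD subsetUr.
by rewrite setDDl setU1K // esignU1 // ltnn mul1r ksgnU1 //=; ring.
Qed.

Lemma wedge_wprod zs x : (forall v, v \in zs -> homog 1 v) ->
  wedge (wprod zs) x = foldr lwedge x zs.
Proof.
elim: zs => [|v zs IH] zs1 /=; first by rewrite wedge1l.
have v1 : homog 1 v by apply: zs1; rewrite mem_head.
by rewrite (wedge_lwedge _ v1) lwedge_wedgeA IH // => u uzs; apply: zs1; rewrite in_cons uzs orbT.
Qed.

Lemma wprodE zs : (forall v, v \in zs -> homog 1 v) -> wprod zs = foldr lwedge kone zs.
Proof. by move=> zs1; rewrite -wedge_wprod // wedge1r. Qed.

Lemma lwedge2E v w y U :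
  lwedge v (lwedge w y) U = \sum_i \sum_k
    (if (i \in U) && (k \in U) && (k != i) then
       esign U i * (-1) ^+ (i < k)%N * esign U k * v [set i] * w [set k] * y (U :\ i :\ k)
     else 0).
Proof.
rewrite ffunE big_mkcond; apply: eq_bigr => i _.
have [iU|iU] := boolP (i \in U); last by rewrite big1.
rewrite ffunE mulr_sumr big_mkcond; apply: eq_bigr => k _.
rewrite in_setD1; case: (eqVneq k i) => [->|ki] /=; first by rewrite andbF.
by rewrite andbT; case: (boolP (k \in U)) => kU //=; rewrite esignD1_sign //; ring.
Qed.

Lemma lwedge_anticomm v w y : lwedge v (lwedge w y) = - lwedge w (lwedge v y).
Proof.
apply/ffunP => U; rewrite [RHS]ffunE; apply/eqP; rewrite -addr_eq0; apply/eqP.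
rewrite !lwedge2E [X in _ + X]exchange_big -big_split; apply: big1 => i _.
rewrite -big_split; apply: big1 => k _ /=.
rewrite [(k \in U) && _]andbC eq_sym; case: ifP => [/andP [_ ki]|_]; last by rewrite addr0.
by rewrite [U :\ k :\ i]setDDl [U :\ i :\ k]setDDl setUC (signr_ltC ki) /=; ring.
Qed.

Lemma lwedge_foldr z x vs :
  lwedge z (foldr lwedge x vs) = kscale ((-1) ^+ size vs) (foldr lwedge (lwedge z x) vs).
Proof.
elim: vs => [|v vs IH] /=; first by rewrite expr0 kscale1.
rewrite lwedge_anticomm IH lwedgeZr; move: (lwedge v _) => y.
by apply/ffunP => S; rewrite !ffunE exprS; move: ((-1) ^+ size vs) (y S) => e yS; ring.
Qed.

End ExteriorAlgebra.

Section Homogeneous.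
Variables (R : comPzRingType) (r : nat).
Local Notation kel := {ffun {set 'I_r} -> R}.
Local Notation kone := (kone R r).
Implicit Types (x y v : kel) (S : {set 'I_r}) (i : 'I_r) (n : nat).

Lemma homog0 n : homog n (0 : kel). Proof. by move=> S _; rewrite ffunE. Qed.

Lemma homogD n x y : homog n x -> homog n y -> homog n (x + y).
Proof. by move=> hx hy S hS; rewrite ffunE hx // hy // addr0. Qed.

Lemma homogN n x : homog n x -> homog n (- x).
Proof. by move=> hx S hS; rewrite ffunE hx // oppr0. Qed.

Lemma homogB n x y : homog n x -> homog n y -> homog n (x - y).
Proof. by move=> hx hy; apply: homogD => //; apply: homogN. Qed.

Lemma homogZ n c x : homog n x -> homog n (kscale c x).
Proof. by move=> hx S hS; rewrite ffunE hx // mulr0. Qed.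

Lemma homog_sum n (I : finType) (F : I -> kel) :
  (forall t, homog n (F t)) -> homog n (\sum_t F t).
Proof. by move=> h; apply: (big_ind (homog n)) => //; [exact: homog0 | exact: homogD]. Qed.

Lemma homog_kone : homog 0 kone.
Proof. by move=> S S0; rewrite ffunE; case: eqP => // eS; rewrite eS cards0 in S0. Qed.

Lemma homog_kgen i : homog 1 (kgen R i).
Proof. by move=> S S1; rewrite ffunE; case: eqP => // eS; rewrite eS cards1 in S1. Qed.

Lemma homog_lwedge n v x : homog n x -> homog n.+1 (lwedge v x).
Proof.
move=> hx U hU; rewrite ffunE big1 // => i iU; rewrite hx ?mulr0 //.
by apply: contra hU; rewrite (cardsD1 i U) iU => /eqP ->.
Qed.

Lemma homog0_kone x : homog 0 x -> x = kscale (x set0) kone.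
Proof.
move=> x0; apply/ffunP => S; rewrite !ffunE; case: eqP => [->|S0]; first by rewrite mulr1.
by rewrite mulr0 x0 // cards_eq0; apply/eqP.
Qed.

Definition kvec (g : 'I_r -> R) : kel := \sum_j kscale (g j) (kgen R j).

Lemma kvec_set1 g i : kvec g [set i] = g i.
Proof.
rewrite sum_ffunE (bigD1 i) //= kscaleE ffunE eqxx mulr1 big1 ?addr0 // => j ji.
by rewrite kscaleE ffunE (inj_eq set1_inj) eq_sym (negbTE ji) mulr0.
Qed.

Lemma homog_kvec g : homog 1 (kvec g).
Proof. by apply: homog_sum => j; apply: homogZ; apply: homog_kgen. Qed.

End Homogeneous.

Lemma sum_antisym (R : zmodType) (n : nat) (Q : 'I_n -> 'I_n -> bool) (F : 'I_n -> 'I_n -> R) :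
  (forall i k, Q i k = Q k i) -> (forall i, Q i i = false) ->
  (forall i k, Q i k -> F k i = - F i k) ->
  \sum_i \sum_k (if Q i k then F i k else 0) = 0.
Proof.
move=> QC Qii FC.
set X := \sum_i \sum_k (if Q i k && (i < k)%N then F i k else 0).
have -> : \sum_i \sum_k (if Q i k then F i k else 0) =
    X + \sum_i \sum_k (if Q i k && (k < i)%N then F i k else 0).
  rewrite /X -big_split; apply: eq_bigr => i _; rewrite -big_split; apply: eq_bigr => k _.
  case: (boolP (Q i k)) => Qik /=; last by rewrite addr0.
  case: ltngtP => ik /=; rewrite ?addr0 ?add0r //.
  by move/val_inj: ik Qik => ->; rewrite Qii.
rewrite exchange_big /X; apply/eqP; rewrite addr_eq0 -sumrN; apply/eqP.
apply: eq_bigr => i _; rewrite -sumrN; apply: eq_bigr => k _.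
by rewrite QC; case: ifP => [/andP [Qki _]|_]; [exact: FC | rewrite oppr0].
Qed.

Section Differential.
Variables (R : comPzRingType) (r : nat) (f : 'I_r -> R).
Local Notation kel := {ffun {set 'I_r} -> R}.
Local Notation kone := (kone R r).
Local Notation kdiff := (kdiff f).
Implicit Types (x y v w : kel) (S U : {set 'I_r}) (i k : 'I_r) (n : nat).

Definition kdot v : R := \sum_i f i * v [set i].

Lemma kdiffE x U : kdiff x U = \sum_(i | i \notin U) esign U i * f i * x (i |: U).
Proof. by rewrite ffunE; apply: eq_bigr => i _; rewrite esign_card. Qed.

Lemma kdiffD x y : kdiff (x + y) = kdiff x + kdiff y.
Proof.
by apply/ffunP => U; rewrite !ffunE -big_split; apply: eq_bigr => i _; rewrite !ffunE /=; ring.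
Qed.

Lemma kdiffN x : kdiff (- x) = - kdiff x.
Proof. apply/ffunP => U; rewrite !ffunE -sumrN; apply: eq_bigr => i _; rewrite !ffunE /=; ring. Qed.

Lemma kdiffB x y : kdiff (x - y) = kdiff x - kdiff y.
Proof. by rewrite kdiffD kdiffN. Qed.

Lemma kdiff0 : kdiff 0 = 0.
Proof. by apply/ffunP => U; rewrite !ffunE big1 // => i _; rewrite ffunE mulr0. Qed.

Lemma kdiff_setT x : kdiff x setT = 0.
Proof. by rewrite kdiffE big_pred0 // => i; rewrite in_setT. Qed.

Lemma kdiff_set0 x : kdiff x set0 = kdot x.
Proof.
rewrite kdiffE (eq_bigl xpredT) => [|i]; last by rewrite in_set0.
by apply: eq_bigr => i _; rewrite esign0 mul1r setU0.
Qed.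

Lemma kdot_kcycle v : kdiff v = 0 -> kdot v = 0.
Proof. by move=> dv; rewrite -kdiff_set0 dv ffunE. Qed.

Lemma kdot_kvec g : kdot (kvec g) = \sum_i f i * g i.
Proof. by apply: eq_bigr => i _; rewrite kvec_set1. Qed.

Lemma kdotB v w : kdot (v - w) = kdot v - kdot w.
Proof. rewrite /kdot -sumrB; apply: eq_bigr => i _; rewrite !ffunE /=; ring. Qed.

Lemma kdotZ c v : kdot (kscale c v) = c * kdot v.
Proof. rewrite /kdot mulr_sumr; apply: eq_bigr => i _; rewrite ffunE /=; ring. Qed.

Lemma kdot_sum (I : finType) (F : I -> kel) : kdot (\sum_t F t) = \sum_t kdot (F t).
Proof. by rewrite /kdot exchange_big; apply: eq_bigr => i _; rewrite sum_ffunE mulr_sumr. Qed.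

Lemma homog_kdiff n x : homog n.+1 x -> homog n (kdiff x).
Proof.
move=> hx U hU; rewrite kdiffE big1 // => i iU; rewrite hx ?mulr0 //.
by rewrite cardsU1 iU /= add1n eqSS.
Qed.

Lemma kdiff_kone : kdiff kone = 0.
Proof.
apply/ffunP => U; rewrite kdiffE ffunE big1 // => i iU; rewrite ffunE.
by case: eqP => [/setP/(_ i)|_]; rewrite ?mulr0 // setU11 inE.
Qed.

Lemma kdiff_deg1 v : homog 1 v -> kdiff v = kscale (kdot v) kone.
Proof.
move=> v1; apply/ffunP => U; rewrite kscaleE; case: (eqVneq U set0) => [->|U0].
  by rewrite kdiff_set0 [kone _]ffunE eqxx mulr1.
rewrite [kone _]ffunE (negbTE U0) mulr0 kdiffE big1 // => i iU.
by rewrite v1 ?mulr0 // cardsU1 iU /= add1n eqSS cards_eq0.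
Qed.

Lemma kdiff_lwedgeE v x U :
  kdiff (lwedge v x) U = \sum_(i | i \notin U) f i * v [set i] * x U +
    \sum_(i | i \notin U) \sum_(k in U)
      esign U i * f i * (-1) ^+ (i < k)%N * esign U k * v [set k] * x (i |: (U :\ k)).
Proof.
rewrite kdiffE -big_split; apply: eq_bigr => i iU; rewrite ffunE (bigD1 i) ?setU11 //=.
rewrite mulrDr; congr (_ + _).
  rewrite esignU1 // ltnn mul1r setU1K // -[RHS]mul1r -(esign_sqr U i); ring.
rewrite mulr_sumr [LHS](eq_bigl (fun k => k \in U)) => [|k]; last first.
  by rewrite in_setU1; case: (eqVneq k i) => [->|] /=; rewrite ?(negbTE iU) ?andbT.
apply: eq_bigr => k kU; have ki : k != i by apply: contraNneq iU => <-.
by rewrite esignU1 // setU1D1 //=; ring.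
Qed.

Lemma lwedge_kdiffE v x U :
  lwedge v (kdiff x) U = \sum_(k in U) (f k * v [set k] * x U -
    \sum_(i | i \notin U)
      esign U i * f i * (-1) ^+ (i < k)%N * esign U k * v [set k] * x (i |: (U :\ k))).
Proof.
rewrite ffunE; apply: eq_bigr => k kU; rewrite kdiffE (bigD1 k) ?setD11 //=.
rewrite mulrDr; congr (_ + _).
  by rewrite esignD1_self setD1K // -[RHS]mul1r -(esign_sqr U k); ring.
rewrite mulr_sumr -sumrN [LHS](eq_bigl (fun i => i \notin U)) => [|i]; last first.
  by rewrite in_setD1; case: (eqVneq i k) => [->|] /=; rewrite ?kU ?andbT.
apply: eq_bigr => i iU; have ik : i != k by apply: contraNneq iU => ->.
rewrite (esignD1 i kU) (signr_ltC ik) -[LHS]mul1r -{1}(@sqrr_sign R (k < i)%N) expr2 /=; ring.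
Qed.

Lemma kdiff_lwedge v x : kdiff (lwedge v x) = kscale (kdot v) x - lwedge v (kdiff x).
Proof.
apply/ffunP => U; rewrite kdiff_lwedgeE ffunE kscaleE ffunE lwedge_kdiffE /kdot mulr_suml sumrB.
rewrite [X in _ = X - _](bigID (fun i => i \in U)) /=.
set G := fun i k =>
  esign U i * f i * (-1) ^+ (i < k)%N * esign U k * v [set k] * x (i |: (U :\ k)).
have GC : \sum_(k in U) \sum_(i | i \notin U) G i k = \sum_(i | i \notin U) \sum_(k in U) G i k.
  rewrite (exchange_big_dep (fun i => i \notin U)) //=; apply: eq_bigr => i iU.
  by apply: eq_bigl => k; rewrite iU andbT.
rewrite /G in GC; rewrite GC; ring.
Qed.

Lemma kdiff2E x U :
  kdiff (kdiff x) U = \sum_i \sum_k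
    (if (i \notin U) && (k \notin U) && (k != i) then
       esign U i * (-1) ^+ (i < k)%N * esign U k * f i * f k * x (k |: (i |: U)) else 0).
Proof.
rewrite kdiffE big_mkcond; apply: eq_bigr => i _.
have [iU|iU] := boolP (i \notin U); last by rewrite big1.
rewrite kdiffE mulr_sumr big_mkcond; apply: eq_bigr => k _.
rewrite in_setU1 negb_or; case: (eqVneq k i) => [->|ki] /=; first by rewrite andbF.
by rewrite andbT; case: (k \in U) => //=; rewrite esignU1 //=; ring.
Qed.

Lemma kdiff_kdiff x : kdiff (kdiff x) = 0.
Proof.
apply/ffunP => U; rewrite kdiff2E ffunE; apply: sum_antisym.
- by move=> i k; rewrite [(i \notin U) && _]andbC eq_sym.
- by move=> i; rewrite eqxx andbF.
- by move=> i k /andP [_ ki]; rewrite setUCA (signr_ltC ki) /=; ring.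
Qed.

Lemma kcycle_lwedge_prod zs : (forall z, z \in zs -> kcycle f 1 z) ->
  kcycle f (size zs) (foldr lwedge kone zs).
Proof.
elim: zs => [|z zs IH] zs_cyc /=; first by split; [exact: homog_kone | exact: kdiff_kone].
have [z1 dz] := zs_cyc z (mem_head z zs).
have [hzs dzs] : kcycle f (size zs) (foldr lwedge kone zs).
  by apply: IH => v vzs; apply: zs_cyc; rewrite in_cons vzs orbT.
split; first exact: homog_lwedge.
by rewrite kdiff_lwedge dzs lwedge0r (kdot_kcycle dz) kscale0 subrr.
Qed.

End Differential.

Lemma count_lt_nth (l : seq nat) a : sorted ltn l -> (a < size l)%N ->
  count (fun p => p < nth 0 l a)%N l = a.
Proof.
elim: l a => [|x l IH] a //= lsort la.
have xl : all (ltn x) l by apply: order_path_min lsort => y z w; apply: ltn_trans.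
have {}lsort : sorted ltn l by move: lsort; case: l {IH la xl} => //= y l /andP[].
case: a la => [|a] la /=.
  rewrite ltnn add0n; apply/eqP; rewrite eqn0Ngt -has_count; apply/hasPn => y yl.
  by rewrite -leqNgt ltnW //; move/allP: xl => /(_ _ yl).
have xa : (x < nth 0 l a)%N by apply: (allP xl); apply: mem_nth.
by rewrite xa IH.
Qed.

Lemma filter_predC1_nth (l : seq nat) a : uniq l -> (a < size l)%N ->
  filter (predC1 (nth 0 l a)) l = take a l ++ drop a.+1 l.
Proof.
move=> luniq la.
have e : l = take a l ++ nth 0 l a :: drop a.+1 l by rewrite -drop_nth // cat_take_drop.
move: luniq; rewrite {1}e cat_uniq => /and3P [_ notl /= /andP [notr _]].
have notl' : nth 0 l a \notin take a l.
  by apply: contra notl => h; apply/hasP; exists (nth 0 l a) => //; exact: mem_head.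
have filter_id s : nth 0 l a \notin s -> filter (predC1 (nth 0 l a)) s = s.
  by move=> h; apply/all_filterP/allP => z zs /=; apply: contraNneq h => <-.
by rewrite {2}e filter_cat /= eqxx /= !filter_id.
Qed.

Lemma nth_take_drop (l : seq nat) a b : (a < size l)%N ->
  nth 0 (take a l ++ drop a.+1 l) b = nth 0 l (bump a b).
Proof.
move=> la; rewrite nth_cat (size_takel (ltnW la)) /bump.
case: ltnP => ab; first by rewrite nth_take // (leqNgt a b) ab add0n.
by rewrite nth_drop add1n addSn subnKC.
Qed.

Section Determinant.
Variables (R : comPzRingType) (r : nat).
Local Notation kel := {ffun {set 'I_r} -> R}.
Local Notation kone := (kone R r).
Implicit Types (v : kel) (vs : seq kel) (S : {set 'I_r}).

(* Coefficient of [e_p] for a natural number [p], with junk value [0] when [p >= r]. *)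
Definition coef1 v (p : nat) : R :=
  if (insub p : option 'I_r) is Some i then v [set i] else 0.

Lemma coef1_val v (i : 'I_r) : coef1 v (val i) = v [set i].
Proof. by rewrite /coef1 valK. Qed.

Definition set_nats S : seq nat := [seq val i | i <- enum S].

Lemma enum_setE S : enum S = filter (mem S) (enum 'I_r).
Proof. by rewrite enumT. Qed.

Lemma set_nats_sorted S : sorted ltn (set_nats S).
Proof.
have ord_sorted : sorted ltn (map val (enum 'I_r)) by rewrite val_enum_ord iota_ltn_sorted.
rewrite /set_nats sorted_map (enum_setE S); rewrite sorted_map in ord_sorted.
by apply: sorted_filter => // x y z; apply: ltn_trans.
Qed.

Lemma set_nats_uniq S : uniq (set_nats S).
Proof. by rewrite /set_nats (map_inj_uniq val_inj) enum_uniq. Qed.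

Lemma size_set_nats S : size (set_nats S) = #|S|.
Proof. by rewrite /set_nats size_map cardE. Qed.

Lemma nth_set_nats S (x0 : 'I_r) a : (a < #|S|)%N ->
  nth 0 (set_nats S) a = val (nth x0 (enum S) a).
Proof. by move=> aS; rewrite /set_nats (nth_map x0) // -cardE. Qed.

Lemma esign_nth S (x0 : 'I_r) a : (a < #|S|)%N -> esign S (nth x0 (enum S) a) = (-1) ^+ a :> R.
Proof.
move=> aS; rewrite -esign_card -sum1dep_card -big_enum_cond sum1_count.
rewrite -[X in _ = _ ^+ X](@count_lt_nth (set_nats S)) ?set_nats_sorted ?size_set_nats //.
by rewrite /set_nats count_map (nth_map x0) // -cardE.
Qed.

Lemma set_nats_D1 S (x0 : 'I_r) a : (a < #|S|)%N ->
  set_nats (S :\ nth x0 (enum S) a) = take a (set_nats S) ++ drop a.+1 (set_nats S).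
Proof.
move=> aS; rewrite -filter_predC1_nth ?set_nats_uniq ?size_set_nats //.
rewrite (nth_set_nats x0 aS) /set_nats filter_map; congr map.
rewrite (enum_setE (_ :\ _)) (enum_setE S) -[RHS]filter_predI.
by apply: eq_filter => j /=; rewrite !inE (inj_eq val_inj) andbC.
Qed.

Definition coef_mx n vs S : 'M[R]_n :=
  \matrix_(a < n, k < n) coef1 (nth 0 vs k) (nth 0 (set_nats S) a).

(* Laplace expansion along the first column is the recursion defining [lwedge]. *)
Lemma lwedge_prod_det vs S : #|S| = size vs ->
  foldr lwedge kone vs S = \det (coef_mx (size vs) vs S).
Proof.
elim: vs S => [|v vs IH] S /= Svs.
  by move/eqP: Svs; rewrite cards_eq0 => /eqP ->; rewrite ffunE eqxx det_mx00.
have [x0 _] : exists x0 : 'I_r, x0 \in S by apply/card_gt0P; rewrite Svs.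
pose ia a := nth x0 (enum S) a.
pose G a := esign S (ia a) * v [set ia a] * foldr lwedge kone vs (S :\ ia a).
rewrite ffunE (expand_det_col _ ord0).
transitivity (\sum_(0 <= a < #|S|) G a).
  by rewrite big_mkord big_enum_val; apply: eq_bigr => a _; rewrite /G /ia (enum_val_nth x0).
rewrite Svs big_mkord; apply: eq_bigr => a _.
have aS : (a < #|S|)%N by rewrite Svs.
have ia_in : ia a \in S by rewrite -mem_enum /ia mem_nth // -cardE.
rewrite /G IH; last by move: Svs; rewrite (cardsD1 (ia a)) ia_in => -[].
rewrite /cofactor !mxE /= (nth_set_nats x0 aS) -/(ia a) coef1_val addn0 esign_nth //.
have -> : row' a (col' ord0 (coef_mx (size vs).+1 (v :: vs) S)) = coef_mx (size vs) vs (S :\ ia a).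
  by apply/matrixP => b k; rewrite !mxE /= set_nats_D1 // nth_take_drop // size_set_nats.
by rewrite /=; ring.
Qed.

Lemma lwedge_prod_setT vs : size vs = r ->
  foldr lwedge kone vs setT = \det (\matrix_(i < r, k < r) nth 0 vs k [set i]).
Proof.
move=> vsr; have := @lwedge_prod_det vs setT; rewrite cardsT card_ord vsr => /(_ erefl) ->.
congr (\det _); apply/matrixP => i k; rewrite !mxE -coef1_val.
by rewrite /set_nats enum_setT -enumT val_enum_ord nth_iota.
Qed.

End Determinant.

Section RegularAcyclic.
Variables (R : comPzRingType) (r : nat) (f : 'I_r -> R).
Local Notation kel := {ffun {set 'I_r} -> R}.
Local Notation kdiff := (kdiff f).
Implicit Types (x y w : kel) (S T U : {set 'I_r}) (i j : 'I_r) (m n : nat).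

(* [x] lies in the Koszul complex of [f_0, ..., f_(m-1)]. *)
Definition supported m x := forall S j, j \in S -> (m <= j)%N -> x S = 0.

(* For [x] supported below [i.+1], [x = kcontr i x /\ e_i + (terms without e_i)]. *)
Definition kcontr i x : kel := [ffun T : {set 'I_r} => if i \in T then 0 else x (i |: T)].

(* [kext i w = w /\ e_i] for [w] supported below [i]. *)
Definition kext i w : kel := [ffun S : {set 'I_r} => if i \in S then w (S :\ i) else 0].

Lemma supportedD m x y : supported m x -> supported m y -> supported m (x + y).
Proof. by move=> sx sy S j jS mj; rewrite ffunE (sx S j) // (sy S j) // addr0. Qed.

Lemma supported_leq m m' x : (m <= m')%N -> supported m x -> supported m' x.
Proof. by move=> mm' sx S j jS m'j; apply: (sx S j jS); apply: leq_trans m'j. Qed.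

Lemma homog_kcontr n i x : homog n.+1 x -> homog n (kcontr i x).
Proof.
move=> hx T nT; rewrite ffunE; case: ifP => // iT.
by rewrite hx // cardsU1 iT add1n eqSS.
Qed.

Lemma supported_kcontr i x : supported i.+1 x -> supported i (kcontr i x).
Proof.
move=> sx T j jT ij; rewrite ffunE; case: ifP => // iT.
have ji : j != i by apply: contraFneq iT => <-.
by apply: (sx _ j); rewrite ?in_setU1 ?jT ?orbT // ltn_neqAle ij eq_sym ji.
Qed.

Lemma kdiff_kcontr i x : supported i.+1 x -> kdiff (kcontr i x) = kcontr i (kdiff x).
Proof.
move=> sx; apply/ffunP => T; rewrite [RHS]ffunE.
have [iT|iT] := boolP (i \in T).
  by rewrite kdiffE big1 // => j _; rewrite ffunE in_setU1 iT orbT mulr0.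
rewrite !kdiffE [LHS](bigD1 i) //= ffunE setU11 mulr0 add0r.
apply: eq_big => [j|j /andP [jT ji]]; first by rewrite in_setU1 negb_or andbC.
rewrite ffunE in_setU1 eq_sym (negbTE ji) (negbTE iT) /= esignU1 // setUCA.
case: (boolP (i < j)%N) => ij; last by rewrite mul1r.
by rewrite (sx _ j) ?mulr0 // !inE eqxx.
Qed.

Lemma homog_kext n i w : homog n w -> homog n.+1 (kext i w).
Proof.
move=> hw S nS; rewrite ffunE; case: ifP => // iS.
by rewrite hw //; move: nS; rewrite (cardsD1 i S) iS add1n eqSS.
Qed.

Lemma supported_kext i w : supported i w -> supported i.+1 (kext i w).
Proof.
move=> sw S j jS ij; rewrite ffunE; case: ifP => // iS.
apply: (sw _ j); last exact: ltnW.
by rewrite in_setD1 jS andbT; apply: contraTneq ij => ->; rewrite ltnn.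
Qed.

Lemma kdiff_kextE i w U : supported i w ->
  kdiff (kext i w) U = if i \in U then kdiff w (U :\ i) else esign U i * f i * w U.
Proof.
move=> sw; have [iU|iU] := boolP (i \in U); last first.
  rewrite kdiffE (bigD1 i) //= big1 ?addr0; first by rewrite ffunE setU11 setU1K.
  by move=> j /andP [_ ji]; rewrite ffunE in_setU1 eq_sym (negbTE ji) (negbTE iU) mulr0.
rewrite !kdiffE [RHS](bigD1 i) ?setD11 //= setD1K // (sw U i iU (leqnn i)) mulr0 add0r.
apply: eq_big => [j|j jU]; first by rewrite in_setD1 andbC; case: eqVneq => // ->; rewrite iU.
have ji : j != i by apply: contraNneq jU => ->.
rewrite ffunE in_setU1 iU orbT setU1D1 1?eq_sym // (esignD1_sign j iU).
case: (boolP (i < j)%N) => ij; last by rewrite mul1r.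
by rewrite (sw _ j) ?mulr0 ?setU11 // ltnW.
Qed.

Lemma supported_sub_kdiff_kext i x w : supported i.+1 x -> supported i w ->
  kcontr i x = kdiff w -> supported i (x - kdiff (kext i w)).
Proof.
move=> sx sw xw S j jS ij.
have -> : (x - kdiff (kext i w)) S = x S - kdiff (kext i w) S by rewrite !ffunE.
rewrite (kdiff_kextE _ sw).
case: ifP => iS; first by rewrite -xw ffunE setD11 setD1K // subrr.
have ji : j != i by apply: contraFneq iS => <-.
have lt_ij : (i < j)%N by rewrite ltn_neqAle ij eq_sym ji.
by rewrite (sx S j) // (sw S j) // mulr0 subrr.
Qed.

Hypothesis f_regular : forall i (t : R),
  ideal_gen (fun c => exists j, (j < i)%N /\ c = f j) (t * f i) ->
  ideal_gen (fun c => exists j, (j < i)%N /\ c = f j) t.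

Lemma kcontr_deg1_boundary i x : homog 1 x -> supported i.+1 x -> kdiff x = 0 ->
  exists w, homog 1 w /\ supported i w /\ kcontr i x = kdiff w.
Proof.
move=> x1 sx dx; set t := x [set i].
have t_in : ideal_gen (fun c => exists j, (j < i)%N /\ c = f j) (t * f i).
  have : \sum_j f j * x [set j] = 0 := kdot_kcycle dx.
  rewrite (bigID (fun j : 'I_r => (j < i)%N)) /= [X in _ + X = _](bigD1 i) ?ltnn //=.
  rewrite [X in _ + (_ + X) = _]big1 ?addr0; last first.
    by move=> j /andP [ji ij]; rewrite (sx _ j) ?set11 ?mulr0 // ltn_neqAle eq_sym ij leqNgt.
  move/eqP; rewrite addrC addr_eq0 mulrC => /eqP ->; apply: ideal_genN.
  by apply: ideal_gen_sum => j ji; rewrite mulrC; apply: idealM; apply: ideal_in; exists j.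
have [g [g0 tg]] := ideal_gen_lincomb (f_regular t_in).
exists (kvec g); split; first exact: homog_kvec.
split.
  move=> S j jS ij; have [/cards1P [k Sk]|S1] := boolP (#|S| == 1%N); last exact: homog_kvec.
  by move: jS; rewrite Sk kvec_set1 inE => /eqP <-; rewrite g0 // -leqNgt.
rewrite (kdiff_deg1 _ (homog_kvec g)) kdot_kvec (homog0_kone (homog_kcontr i x1)).
by rewrite ffunE in_set0 setU0 -/t tg; congr kscale; apply: eq_bigr => j _; rewrite mulrC.
Qed.

Lemma supported_kacyclic m : (m <= r)%N -> forall n x,
  homog n.+1 x -> supported m x -> kdiff x = 0 ->
  exists y, homog n.+2 y /\ supported m y /\ x = kdiff y.
Proof.
elim: m => [_ n x hx sx _|m IH mr n x hx sx dx].
  have -> : x = 0.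
    apply/ffunP => S; rewrite ffunE; have [->|[j jS]] := set_0Vmem S; last exact: sx jS _.
    by rewrite hx // cards0.
  by exists 0; split; [exact: homog0 | split; [move=> S j _ _; rewrite ffunE | rewrite kdiff0]].
have [i im] : exists i : 'I_r, val i = m by exists (Ordinal mr).
rewrite -im in IH mr sx *.
have [w [hw [sw xw]]] : exists w, homog n.+1 w /\ supported i w /\ kcontr i x = kdiff w.
  case: n hx => [|n] hx; first exact: kcontr_deg1_boundary.
  apply: IH; [exact: ltnW | exact: homog_kcontr | exact: supported_kcontr |].
  by rewrite kdiff_kcontr // dx; apply/ffunP => T; rewrite !ffunE; case: ifP.
have [y [hy [sy xy]]] : exists y,
    homog n.+2 y /\ supported i y /\ x - kdiff (kext i w) = kdiff y.
  apply: IH; [exact: ltnW | exact/homogB/homog_kdiff/homog_kext |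
    exact: supported_sub_kdiff_kext | by rewrite kdiffB dx kdiff_kdiff subrr].
exists (kext i w + y); split; first by apply: homogD => //; apply: homog_kext.
split; first by apply: supportedD; [exact: supported_kext | exact: supported_leq sy].
by rewrite kdiffD -xy addrC subrK.
Qed.

End RegularAcyclic.

Section SpanIdeal.
Variables (R : comPzRingType) (r : nat).
Local Notation kel := {ffun {set 'I_r} -> R}.
Implicit Types (P : kel -> Prop) (Q : R -> Prop) (x y g z : kel) (U : {set 'I_r}).

Lemma kspan_ideal_gen P Q (phi : kel -> R) :
  phi 0 = 0 -> (forall x y, phi (x + y) = phi x + phi y) ->
  (forall t x, phi (kscale t x) = t * phi x) ->
  (forall x, P x -> ideal_gen Q (phi x)) -> forall x, kspan P x -> ideal_gen Q (phi x).
Proof.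
move=> phi0 phiD phiZ hP x; elim=> [|y /hP //|y1 y2 _ h1 _ h2|t y _ h].
- by rewrite phi0; apply: ideal0.
- by rewrite phiD; apply: idealD.
- by rewrite phiZ; apply: idealM.
Qed.

Lemma kspan_coef P Q U x :
  (forall y, P y -> ideal_gen Q (y U)) -> kspan P x -> ideal_gen Q (x U).
Proof.
move=> hP; apply: (kspan_ideal_gen (phi := fun y => y U)) hP x => [|y1 y2|t y].
- by rewrite ffunE.
- by rewrite ffunE.
- by rewrite kscaleE.
Qed.

Lemma kspan_wedgel P Q U x z :
  (forall y, P y -> ideal_gen Q (wedge y z U)) -> kspan P x -> ideal_gen Q (wedge x z U).
Proof.
move=> hP; apply: (kspan_ideal_gen (phi := fun y => wedge y z U)) hP x => [|y1 y2|t y].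
- by rewrite wedge0l ffunE.
- by rewrite wedgeDl ffunE.
- by rewrite wedgeZl kscaleE.
Qed.

Lemma kspan_wedger P Q U g x :
  (forall y, P y -> ideal_gen Q (wedge g y U)) -> kspan P x -> ideal_gen Q (wedge g x U).
Proof.
move=> hP; apply: (kspan_ideal_gen (phi := fun y => wedge g y U)) hP x => [|y1 y2|t y].
- by rewrite wedge0r ffunE.
- by rewrite wedgeDr ffunE.
- by rewrite wedgeZr kscaleE.
Qed.

End SpanIdeal.

Section KittFitting.
Variables (R : comPzRingType) (r : nat) (f : 'I_r -> R).
Variables (s : nat) (a : 'I_s -> R) (c : 'M[R]_(r, s)).
Hypothesis a_def : forall j, a j = \sum_(i < r) c i j * f i.
Local Notation kel := {ffun {set 'I_r} -> R}.
Local Notation kone := (kone R r).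
Local Notation kdiff := (kdiff f).
Local Notation kdot := (kdot f).
Local Notation zeta := (kzeta c).
Implicit Types (x y z v : kel) (zs vs : seq kel) (j : 'I_s) (t : R).

Lemma kzeta_set1 j i : zeta j [set i] = c i j.
Proof. exact: kvec_set1. Qed.

Lemma homog_kzeta j : homog 1 (zeta j).
Proof. exact: homog_kvec. Qed.

Lemma kdot_kzeta j : kdot (zeta j) = a j.
Proof. by rewrite kdot_kvec a_def; apply: eq_bigr => i _; rewrite mulrC. Qed.

Lemma homog_map_kzeta (js : seq 'I_s) v : v \in map zeta js -> homog 1 v.
Proof. by move=> /mapP [j _ ->]; apply: homog_kzeta. Qed.

Lemma lwedge_prod_kdiff zs y : (forall z, z \in zs -> idealF a (kdot z)) ->
  exists A : kel, (forall S, idealF a (A S)) /\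
    foldr lwedge (kdiff y) zs = kscale ((-1) ^+ size zs) (kdiff (foldr lwedge y zs)) + A.
Proof.
elim: zs => [|z zs IH] zs_a /=.
  by exists 0; split; [move=> S; rewrite ffunE; exact: ideal0 | rewrite expr0 kscale1 addr0].
have [|A [A_a ->]] := IH; first by move=> v vzs; apply: zs_a; rewrite in_cons vzs orbT.
have z_a : idealF a (kdot z) by apply: zs_a; exact: mem_head.
exists (kscale ((-1) ^+ size zs) (kscale (kdot z) (foldr lwedge y zs)) + lwedge z A); split.
  move=> S; rewrite ffunE !kscaleE ffunE; apply: idealD.
    by apply: idealM; apply: ideal_genMr.
  by apply: ideal_gen_sum => i _; apply: idealM; apply: A_a.
rewrite lwedgeDr lwedgeZr kdiff_lwedge.
apply/ffunP => S; rewrite !ffunE exprS /=.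
move: (\sum_(i in S) _) (\sum_(i in S) _) (kdot z) (foldr lwedge y zs S) => X1 X2 d Y.
by move: ((-1) ^+ size zs) => e; ring.
Qed.

Lemma kGamma_wedge_kdiff n g y : kGamma c n g -> idealF a (wedge g (kdiff y) setT).
Proof.
apply: kspan_wedgel => _ [js ->]; rewrite wedge_wprod; last exact: homog_map_kzeta.
have [|A [A_a ->]] := @lwedge_prod_kdiff (map zeta js) y.
  by move=> _ /mapP [j _ ->]; rewrite kdot_kzeta; apply: ideal_in; exists j.
by rewrite ffunE kscaleE kdiff_setT mulr0 add0r; apply: A_a.
Qed.

Lemma lwedge_prod_Fitt0 vs : size vs = r -> (forall v, v \in vs -> idealF a (kdot v)) ->
  Fitt0_quot f a (foldr lwedge kone vs setT).
Proof.
move=> vsr vs_a; rewrite lwedge_prod_setT //; apply: ideal_in.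
exists (\matrix_(i < r, k < r) nth 0 vs k [set i]); split => // k.
rewrite (eq_bigr (fun i => f i * nth 0 vs k [set i])) => [|i _]; last by rewrite mxE mulrC.
by apply: vs_a; rewrite mem_nth // vsr.
Qed.

Lemma Kitt_gen_Fitt0_add t : koszul_gen_deg1 f ->
  (exists n g z, (n <= r)%N /\ kGamma c n g /\ kcycle f (r - n) z /\ t = wedge g z setT) ->
  ideal_add (Fitt0_quot f a) (idealF a) t.
Proof.
move=> fgen [n [g [z [nr [gG [zZ ->]]]]]].
have [y [b [yP [[y' [_ ->]] ->]]]] := fgen _ _ zZ.
exists (wedge g y setT), (wedge g (kdiff y') setT); split; last first.
  by split; [exact: kGamma_wedge_kdiff gG | rewrite wedgeDr ffunE].
apply: kspan_wedgel gG => _ [js ->]; apply: kspan_wedger yP => _ [zs [zs_cyc ->]].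
rewrite wedge_wprod ?wprodE -?foldr_cat; last 2 first.
- by move=> v /zs_cyc [].
- exact: homog_map_kzeta.
apply: lwedge_prod_Fitt0; first by rewrite size_cat size_map !size_tuple subnKC.
move=> v; rewrite mem_cat => /orP [/mapP [j _ ->]|/zs_cyc [_ dv]].
  by rewrite kdot_kzeta; apply: ideal_in; exists j.
by rewrite (kdot_kcycle dv); apply: ideal0.
Qed.

Lemma idealF_gen_Kitt t : (exists j, t = a j) -> Kitt f c t.
Proof.
move=> [j ->]; have [r0|r_gt0] := posnP r.
  by rewrite a_def big1; [exact: ideal0 | move=> i _; have := ltn_ord i; rewrite {2}r0].
pose etop : kel := [ffun S => (S == setT)%:R].
have etop_r : homog r etop.
  by move=> S Sr; rewrite ffunE; case: eqP => // eS; rewrite eS cardsT card_ord eqxx in Sr.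
apply: ideal_in; exists 1%N, (wprod [:: zeta j]), (kdiff etop); split => //.
split; first by apply: kspan_gen; exists [tuple j].
split; first by split; [apply: homog_kdiff; rewrite subn1 prednK | exact: kdiff_kdiff].
rewrite wedge_wprod /=; last by move=> v; rewrite inE => /eqP ->; exact: homog_kzeta.
(* Boundaries have zero top coefficient, so the Leibniz rule for [d (zeta_j /\ e_top)]
   gives [a_j = (zeta_j /\ d e_top)_top]. *)
have := congr1 (fun x => x setT) (kdiff_lwedge f (zeta j) etop).
have -> : (kscale (kdot (zeta j)) etop - lwedge (zeta j) (kdiff etop)) setT =
    kdot (zeta j) * etop setT - lwedge (zeta j) (kdiff etop) setT by rewrite !ffunE.
by rewrite kdiff_setT kdot_kzeta ffunE eqxx mulr1 => /eqP; rewrite eq_sym subr_eq0 => /eqP.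
Qed.

Definition zeta_cycle_prod n x := exists (js : seq 'I_s) zs,
  (forall z, z \in zs -> kcycle f 1 z) /\ (size js + size zs)%N = n /\
  x = foldr lwedge (foldr lwedge kone zs) (map zeta js).

Lemma zeta_cycle_prod_Kitt x : kspan (zeta_cycle_prod r) x -> Kitt f c (x setT).
Proof.
apply: kspan_coef => _ [js [zs [zs_cyc [size_r ->]]]].
apply: ideal_in; exists (size js), (wprod (map zeta js)), (wprod zs).
split; first by rewrite -size_r leq_addr.
split; first by apply: kspan_gen; exists (in_tuple js).
have zs1 v : v \in zs -> homog 1 v by move=> /zs_cyc [].
have -> : (r - size js)%N = size zs by move: (size zs) size_r => m <-; rewrite addKn.
split; first by rewrite wprodE //; exact: kcycle_lwedge_prod.
by rewrite wedge_wprod ?wprodE //; exact: homog_map_kzeta.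
Qed.

Lemma lwedge_zeta_cycle_prod n z (d : 'I_s -> R) x : kcycle f 1 z ->
  kspan (zeta_cycle_prod n) x ->
  kspan (zeta_cycle_prod n.+1) (lwedge (z + \sum_j kscale (d j) (zeta j)) x).
Proof.
move=> zZ; elim=> [|_ [js [zs [zs_cyc [size_n ->]]]]|x1 x2 _ h1 _ h2|t y _ h].
- by rewrite lwedge0r; apply: kspan0.
- rewrite lwedgeDl lwedge_suml; apply: kspanD.
    rewrite lwedge_foldr; apply/kspanZ/kspan_gen; exists js, (z :: zs); split.
      by move=> v; rewrite in_cons => /orP [/eqP -> //|]; exact: zs_cyc.
    by split; first by rewrite /= addnS size_n.
  apply: (big_ind (kspan _)); [exact: kspan0 | exact: kspanD | move=> j _].
  rewrite lwedgeZl; apply/kspanZ/kspan_gen; exists (j :: js), zs.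
  by split => //; split; first by rewrite /= addSn size_n.
- by rewrite lwedgeDr; apply: kspanD.
- by rewrite lwedgeZr; apply: kspanZ.
Qed.

Lemma lwedge_prod_zeta_cycle ms :
  (forall m, m \in ms -> exists z (d : 'I_s -> R),
     kcycle f 1 z /\ m = z + \sum_j kscale (d j) (zeta j)) ->
  kspan (zeta_cycle_prod (size ms)) (foldr lwedge kone ms).
Proof.
elim: ms => [|m ms IH] ms_dec /=; first by apply: kspan_gen; exists [::], [::].
have [z [d [zZ ->]]] := ms_dec m (mem_head m ms).
by apply: lwedge_zeta_cycle_prod => //; apply: IH => v vms; apply: ms_dec; rewrite in_cons vms orbT.
Qed.

Lemma Fitt0_gen_Kitt t :
  (exists M : 'M[R]_r, (forall k, idealF a (\sum_i M i k * f i)) /\ t = \det M) ->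
  Kitt f c t.
Proof.
move=> [M [M_a ->]].
pose ms := [seq kvec (fun i => M i k) | k <- enum 'I_r].
have size_ms : size ms = r by rewrite size_map size_enum_ord.
have -> : \det M = foldr lwedge kone ms setT.
  rewrite lwedge_prod_setT //; congr (\det _); apply/matrixP => i k.
  by rewrite mxE (nth_map k) ?size_enum_ord // nth_ord_enum kvec_set1.
apply: zeta_cycle_prod_Kitt; rewrite -[in zeta_cycle_prod r]size_ms.
apply: lwedge_prod_zeta_cycle => _ /mapP [k _ ->].
have [d Mk] := idealF_lincomb (M_a k).
pose z := kvec (fun i => M i k) - \sum_j kscale (d j) (zeta j).
exists z, d; split; last by rewrite subrK.
have z1 : homog 1 z.
  by apply: homogB; [exact: homog_kvec | apply: homog_sum => j; apply/homogZ/homog_kzeta].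
split; rewrite // (kdiff_deg1 f z1) kdotB kdot_kvec kdot_sum.
rewrite (eq_bigr (fun j => d j * a j)) => [|j _]; last by rewrite kdotZ kdot_kzeta.
by rewrite -Mk (eq_bigr (fun i => M i k * f i)) ?subrr ?kscale0 // => i _; rewrite mulrC.
Qed.

Lemma wprod_kzeta_setT (js : r.-tuple 'I_s) : wprod (map zeta js) setT = \det (colsub (tnth js) c).
Proof.
rewrite wprodE; last exact: homog_map_kzeta.
rewrite lwedge_prod_setT ?size_map ?size_tuple //; congr (\det _); apply/matrixP => i k.
by rewrite !mxE (nth_map (tnth js k)) ?size_tuple // -tnth_nth kzeta_set1.
Qed.

Lemma kGamma_top_minors g : kGamma c r g -> minors_ideal c (g setT).
Proof.
apply: kspan_coef => _ [js ->]; rewrite wprod_kzeta_setT.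
by apply: ideal_in; exists (tnth js).
Qed.

Lemma minor_Kitt t : (exists g : 'I_r -> 'I_s, t = \det (colsub g c)) -> Kitt f c t.
Proof.
move=> [g ->]; apply: ideal_in; exists r, (wprod (map zeta [tuple g i | i < r])), kone.
split => //; split; first by apply: kspan_gen; exists [tuple g i | i < r].
split; first by rewrite subnn; split; [exact: homog_kone | exact: kdiff_kone].
rewrite wedge1r wprod_kzeta_setT; congr (\det _); apply/matrixP => i k.
by rewrite !mxE tnth_mktuple.
Qed.

Lemma Kitt_gen_minors_add t : (forall n z, kcycle f n.+1 z -> kbound f n.+1 z) ->
  (exists n g z, (n <= r)%N /\ kGamma c n g /\ kcycle f (r - n) z /\ t = wedge g z setT) ->
  ideal_add (minors_ideal c) (idealF a) t.
Proof.
move=> acyclic [n [g [z [nr [gG [zZ ->]]]]]].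
have [n_lt_r|r_le_n] := ltnP n r.
  have [k rk] : exists k, (r - n)%N = k.+1 by exists (r - n).-1; rewrite prednK // subn_gt0.
  rewrite rk in zZ; have [y [_ ->]] := acyclic _ _ zZ.
  exists 0, (wedge g (kdiff y) setT); split; first exact: ideal0.
  by split; [exact: kGamma_wedge_kdiff gG | rewrite add0r].
have nr' : n = r by apply/eqP; rewrite eqn_leq nr r_le_n.
move: zZ gG; rewrite nr' subnn => -[z0 _] gG.
rewrite (homog0_kone z0) wedgeZr kscaleE wedge1r.
exists (z set0 * g setT), 0; split; first by apply: idealM; apply: kGamma_top_minors.
by split; [exact: ideal0 | rewrite addr0].
Qed.

End KittFitting.

Lemma regular_kacyclic (R : comPzRingType) (r : nat) (f : 'I_r -> R) : regular_seq f ->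
  forall n x, kcycle f n.+1 x -> kbound f n.+1 x.
Proof.
move=> [f_regular _] n x [hx dx].
have sx : supported r x by move=> S i _; rewrite leqNgt ltn_ord.
by have [y [hy [_ ->]]] := supported_kacyclic f_regular (leqnn r) hx sx dx; exists y.
Qed.

Lemma almost_regular_gen_deg1 (R : comPzRingType) (r : nat) (f : 'I_r -> R) :
  almost_regular f -> koszul_gen_deg1 f.
Proof.
move=> [_ [_ acyclic]] n x xZ.
have [xB|xP] : kbound f n x \/ kspan (prod_deg1_cycles f n) x.
  case: n xZ => [|[|n]] xZ; [right | right | by left; apply: acyclic].
  - rewrite (homog0_kone xZ.1); apply/kspanZ/kspan_gen.
    by exists [tuple]; split => // z; rewrite in_nil.
  - apply: kspan_gen; exists [tuple x]; split; first by move=> z; rewrite inE => /eqP ->.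
    by rewrite /wprod /= wedge1r.
- by exists 0, x; rewrite add0r; split; [exact: kspan0 | split].
- exists x, 0; rewrite addr0; split => //; split => //.
  by exists 0; split; [exact: homog0 | rewrite kdiff0].
Qed.

Theorem corollary4p24 (R : comPzRingType) (r : nat) (f : 'I_r -> R) :
  (koszul_gen_deg1 f ->
     forall (s : nat) (a : 'I_s -> R) (c : 'M[R]_(r, s)),
       (forall j, a j = \sum_(i < r) c i j * f i) ->
       ideal_eq (Kitt f c) (ideal_add (Fitt0_quot f a) (idealF a)))
  /\
  (almost_regular f ->
     forall (s : nat) (a : 'I_s -> R) (c : 'M[R]_(r, s)),
       (forall j, a j = \sum_(i < r) c i j * f i) ->
       ideal_eq (Kitt f c) (ideal_add (Fitt0_quot f a) (idealF a)))
  /\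
  (regular_seq f ->
     forall (s : nat) (a : 'I_s -> R) (Phi : 'M[R]_(r, s)),
       (forall j, a j = \sum_(i < r) Phi i j * f i) ->
       ideal_eq (Kitt f Phi) (ideal_add (minors_ideal Phi) (idealF a))).
Proof.
have gen_deg1_case : koszul_gen_deg1 f -> forall (s : nat) (a : 'I_s -> R) (c : 'M[R]_(r, s)),
    (forall j, a j = \sum_(i < r) c i j * f i) ->
    ideal_eq (Kitt f c) (ideal_add (Fitt0_quot f a) (idealF a)).
  move=> fgen s a c a_def; apply: ideal_eq_gen_add => x.
  - exact: Kitt_gen_Fitt0_add.
  - exact: Fitt0_gen_Kitt.
  - exact: idealF_gen_Kitt.
split; first exact: gen_deg1_case.
split; first by move=> /almost_regular_gen_deg1; exact: gen_deg1_case.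
move=> freg s a Phi a_def; apply: ideal_eq_gen_add => x.
- exact/Kitt_gen_minors_add/regular_kacyclic.
- exact: minor_Kitt.
- exact: idealF_gen_Kitt.
Qed.
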